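(* Let $\{(G_n,\Psi_n,\varphi^L_n,\varphi^U_n)\}_{n\ge0}$ be an $\mathcal{F}$-system (with $\varphi^L_n<\varphi^U_n$ on $G_n$) satisfying Condition $\Gamma$, with induced Cantor system $(X,H_X)$ and associated fence $\mathbf{F}_\Phi$. Then there exists a continuous surjection $T:\mathbf{F}_\Phi\to\mathbf{F}_\Phi$, having $H_X$ as a factor, given by $T(x,t)=(H_X(x),s(x,t))$. Moreover, if the system additionally satisfies Condition $\Gamma^+$ and $H_X$ is a homeomorphism of $X$, then $T$ is a homeomorphism of $\mathbf{F}_\Phi$.
   Context: An $\mathcal{F}$-system consists of: finite directed graphs $G_n$ ($n\ge0$), each vertex having at least one outgoing and one incoming edge; surjective maps $\Psi_n:G_{n+1}\to G_n$ sending edges to edges; such that (i) for each $n$ and $v\in G_n$ there are $m>n$ and distinct $v',v''\in G_{m+1}$ with $\Psi_n\circ\cdots\circ\Psi_m(v')=\Psi_n\circ\cdots\circ\Psi_m(v'')=v$; (ii) for every $m$ there is $n>m$ such that for every $g\in G_n$ the set $\{\Psi_m\circ\cdots\circ\Psi_{n-1}(g'):\overrightarrow{gg'}\in G_n\}$ has exactly one element; and maps $\varphi^L_n,\varphi^U_n:G_n\to[0,1]$ with $\varphi^L_n\le\varphi^U_n$, $\varphi^U_{n+1}(v')\le\varphi^U_n(\Psi_n(v'))$, $\varphi^L_{n+1}(v')\ge\varphi^L_n(\Psi_n(v'))$, and such that for every $g\in G_n$ there is $g'\in G_{n+1}$ with $\Psi_n(g')=g$, $\varphi^L_{n+1}(g')=\varphi^L_n(g)$,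 $\varphi^U_{n+1}(g')=\varphi^U_n(g)$. $X=\{x\in\prod_n G_n: x(n)=\Psi_n(x(n+1))\ \forall n\}$; $H_X:X\to X$ is the continuous surjection whose graph is $\{(x,y)\in X^2:\overrightarrow{x(n)y(n)}\in G_n\ \forall n\}$. $\varphi^U(x)=\lim_n\varphi^U_n(x(n))$, $\varphi^L(x)=\lim_n\varphi^L_n(x(n))$, $\Phi=(\varphi^L,\varphi^U)$, $\mathbf{F}_\Phi=\{(x,t)\in X\times[0,1]:\varphi^L(x)\le t\le\varphi^U(x)\}$. ''Having $H_X$ as a factor'' means $\pi\circ T=H_X\circ\pi$ for $\pi(x,t)=x$. For $u,v\in G_n$ let $s_n(u,v)$ be the increasing affine map of $[\varphi^L_n(u),\varphi^U_n(u)]$ onto $[\varphi^L_n(v),\varphi^U_n(v)]$: $s_n(u,v)(t)=\frac{\varphi^U_n(v)-\varphi^L_n(v)}{\varphi^U_n(u)-\varphi^L_n(u)}(t-\varphi^L_n(u))+\varphi^L_n(v)$. For an edge $\overrightarrow{uv}\in G_n$: $\Gamma_n(\overrightarrow{uv})=\max\{|s_n(u,v)(t)-s_{n+1}(u',v')(t)| : \overrightarrow{u'v'}\in G_{n+1},\Psi_n(u')=u,\Psi_n(v')=v,\ t\in[\varphi^L_{n+1}(u'),\varphi^U_{n+1}(u')]\}$ and $\Gamma^+_n(\overrightarrow{uv})=\max\{|s_n(v,u)(t)-s_{n+1}(v',u')(t)| : \overrightarrow{u'v'}\in G_{n+1},\Psi_n(u')=u,\Psi_n(v')=v,\ t\in[\varphi^L_{n+1}(v'),\varphi^U_{n+1}(v')]\}$;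 $\Gamma_n=\max\Gamma_n(\overrightarrow{uv})$, $\Gamma^+_n=\max\Gamma^+_n(\overrightarrow{uv})$. Condition $\Gamma$: $\sum_n\Gamma_n<\infty$; Condition $\Gamma^+$: $\sum_n\Gamma^+_n<\infty$. Finally $s:\mathbf{F}_\Phi\to\mathbb{R}$, $s(x,t)=\lim_n s_n(x(n),H_X(x)(n))(t)$ (the limit exists uniformly under Condition $\Gamma$). *)

From HB Require Import structures.
From mathcomp Require Import all_boot all_order all_algebra.
From mathcomp Require Import all_classical all_reals all_analysis.

Import Order.TTheory GRing.Theory Num.Theory.
Import numFieldNormedType.Exports.
Local Open Scope classical_set_scope.
Local Open Scope ring_scope.

Record FData (R : realType) := {
  vert : nat -> finType;
  edge : forall n, rel (vert n);
  Psi : forall n, vert n.+1 -> vert n;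
  phiL : forall n, vert n -> R;
  phiU : forall n, vert n -> R }.
Arguments vert {R} _ _.
Arguments edge {R} _ _.
Arguments Psi {R} _ _.
Arguments phiL {R} _ _.
Arguments phiU {R} _ _.

Fixpoint psik {R : realType} (S : FData R) (n k : nat) : vert S (k + n) -> vert S n :=
  match k return vert S (k + n) -> vert S n with
  | 0 => fun v => v
  | k'.+1 => fun v => psik S n k' (Psi S (k' + n) v)
  end.

Definition is_Fsystem {R : realType} (S : FData R) : Prop :=
  [/\
      (forall n (v : vert S n), (exists w, edge S n v w) /\ (exists u, edge S n u v)),
      (forall n (v : vert S n), exists v' : vert S n.+1, Psi S n v' = v) /\
      (forall n (u v : vert S n.+1), edge S n.+1 u v -> edge S n (Psi S n u) (Psi S n v)),
      (* condition (i): with m + 1 = k + n, m > n iff 1 < k *)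
      (forall n (v : vert S n), exists k, (1 < k)%N /\
         exists v' v'' : vert S (k + n),
           v' <> v'' /\ psik S n k v' = v /\ psik S n k v'' = v),
      (* condition (ii): with n = k + m, n > m iff 0 < k *)
      (forall m, exists k, (0 < k)%N /\ forall g : vert S (k + m),
         exists w : vert S m,
           (exists g', edge S (k + m) g g' /\ psik S m k g' = w) /\
           (forall g', edge S (k + m) g g' -> psik S m k g' = w)) &
      [/\ (forall n v, 0 <= phiL S n v /\ phiL S n v <= phiU S n v /\ phiU S n v <= 1),
          (forall n (v' : vert S n.+1), phiU S n.+1 v' <= phiU S n (Psi S n v')),
          (forall n (v' : vert S n.+1), phiL S n (Psi S n v') <= phiL S n.+1 v') &
          (forall n (g : vert S n), exists g' : vert S n.+1,
             [/\ Psi S n g' = g, phiL S n.+1 g' = phiL S n g & phiU S n.+1 g' = phiU S n g])]].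

Definition VT {R : realType} (S : FData R) (n : nat) : uniformType :=
  discrete_topology (vert S n).

Definition Pt {R : realType} (S : FData R) : topologicalType := prod_topology (fun n => VT S n).

Definition Xset {R : realType} (S : FData R) : set (Pt S) :=
  [set x | forall n, x n = Psi S n (x n.+1)].

Definition HXrel {R : realType} (S : FData R) (x y : Pt S) : Prop :=
  Xset S x /\ Xset S y /\ forall n, edge S n (x n) (y n).

(* H_X : the (under the F-system axioms unique) y with (x, y) in the
   graph; an arbitrary value (x itself) when there is none *)
Definition HX {R : realType} (S : FData R) (x : Pt S) : Pt S :=
  match pselect (exists y, HXrel S x y) with
  | left h => proj1_sig (cid h)
  | right _ => x
  end.

Definition phiUlim {R : realType} (S : FData R) (x : Pt S) : R :=
  limn (fun n => phiU S n (x n)).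
Definition phiLlim {R : realType} (S : FData R) (x : Pt S) : R :=
  limn (fun n => phiL S n (x n)).

Definition Fence {R : realType} (S : FData R) : set (Pt S * R) :=
  [set p | Xset S p.1 /\ phiLlim S p.1 <= p.2 /\ p.2 <= phiUlim S p.1].

Definition sn {R : realType} (S : FData R) (n : nat) (u v : vert S n) (t : R) : R :=
  (phiU S n v - phiL S n v) / (phiU S n u - phiL S n u) * (t - phiL S n u)
  + phiL S n v.

(* Gamma_n = max over edges uv of G_n of Gamma_n(uv); the max of the
   finite union of the (compact) sets below is its supremum *)
Definition GammaSet {R : realType} (S : FData R) (n : nat) : set R :=
  [set r | exists (u v : vert S n) (u' v' : vert S n.+1) (t : R),
     [/\ edge S n u v /\ edge S n.+1 u' v', Psi S n u' = u, Psi S n v' = v,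
         phiL S n.+1 u' <= t /\ t <= phiU S n.+1 u' &
         r = `| sn S n u v t - sn S n.+1 u' v' t |]].
Definition Gamma {R : realType} (S : FData R) (n : nat) : R := sup (GammaSet S n).

Definition GammaPlusSet {R : realType} (S : FData R) (n : nat) : set R :=
  [set r | exists (u v : vert S n) (u' v' : vert S n.+1) (t : R),
     [/\ edge S n u v /\ edge S n.+1 u' v', Psi S n u' = u, Psi S n v' = v,
         phiL S n.+1 v' <= t /\ t <= phiU S n.+1 v' &
         r = `| sn S n v u t - sn S n.+1 v' u' t |]].
Definition GammaPlus {R : realType} (S : FData R) (n : nat) : R :=
  sup (GammaPlusSet S n).

Definition CondGamma {R : realType} (S : FData R) : Prop :=
  (\sum_(0 <= n <oo) (Gamma S n)%:E < +oo)%E.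
Definition CondGammaPlus {R : realType} (S : FData R) : Prop :=
  (\sum_(0 <= n <oo) (GammaPlus S n)%:E < +oo)%E.

Definition sfun {R : realType} (S : FData R) (x : Pt S) (t : R) : R :=
  limn (fun n => sn S n (x n) (HX S x n) t).

Definition Tmap {R : realType} (S : FData R) (p : Pt S * R) : Pt S * R :=
  (HX S p.1, sfun S p.1 p.2).

Definition homeo_on {U : topologicalType} (A : set U) (f : U -> U) : Prop :=
  [/\ (forall a, A a -> A (f a)), {within A, continuous f} &
      exists g : U -> U,
        [/\ (forall a, A a -> A (g a)),
            (forall a, A a -> g (f a) = a),
            (forall a, A a -> f (g a) = a) &
            {within A, continuous g}]].

(* For x in X, the maps s_n(x(n), H_X(x)(n)) are the increasing affine maps between
   the nested intervals [phiL_n(x(n)), phiU_n(x(n))] and those along H_X(x).  The sum of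
   the Gamma_n bounds the successive differences uniformly, so the s_n converge uniformly
   on the limit interval of x and the limit is again the affine map onto the limit interval
   of H_X(x); when the interval of x degenerates to a point, evaluating the limit at the
   endpoints shows that the interval of H_X(x) degenerates too.  So T maps the fibre over x
   onto the fibre over H_X(x).  Each s_n only depends on finitely many coordinates of x, so
   uniform convergence gives continuity, and surjectivity of H_X comes from Koenig's lemma
   in the finite graphs G_n.  Under Condition Gamma+ the construction applied to the
   inverse of H_X produces, fibrewise, the inverse affine maps, hence a continuous inverse
   of T. *)

From HB Require Import structures.
From mathcomp Require Import all_boot all_order all_algebra.
From mathcomp Require Import all_classical all_reals all_analysis.
From mathcomp Require Import ring lra.
Import Order.TTheory GRing.Theory Num.Theory.
Import numFieldNormedType.Exports.
Local Open Scope classical_set_scope.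
Local Open Scope ring_scope.

Set Implicit Arguments.
Unset Strict Implicit.

(** * Affine maps between nested intervals *)

Section IntervalAffine.
Variable R : realType.
Implicit Types a b c d t : R.

Definition interval_affine a b c d t := (d - c) / (b - a) * (t - a) + c.

Lemma interval_affine_lo a b c d : interval_affine a b c d a = c.
Proof. by rewrite /interval_affine subrr mulr0 add0r. Qed.

Lemma interval_affine_hi a b c d : a != b -> interval_affine a b c d b = d.
Proof. by move=> ab; rewrite /interval_affine divfK ?subrK // subr_eq0 eq_sym. Qed.

Lemma interval_affineK a b c d : a != b -> c != d ->
  cancel (interval_affine a b c d) (interval_affine c d a b).
Proof.
move=> ab cd t; rewrite /interval_affine; field.
by rewrite !subr_eq0 ![_ == a]eq_sym ![_ == c]eq_sym ab cd.
Qed.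

Lemma interval_affine_range a b c d t : a < b -> c <= d -> a <= t <= b ->
  c <= interval_affine a b c d t <= d.
Proof.
move=> ab cd /andP[ta tb]; rewrite /interval_affine.
have k0 : 0 <= (d - c) / (b - a) by rewrite divr_ge0 // subr_ge0 // ltW.
have kba : (d - c) / (b - a) * (b - a) = d - c by rewrite divfK // subr_eq0 gt_eqF.
have : (d - c) / (b - a) * (t - a) <= (d - c) / (b - a) * (b - a).
  by rewrite ler_wpM2l // lerD2r.
have : 0 <= (d - c) / (b - a) * (t - a) by rewrite mulr_ge0 // subr_ge0.
rewrite kba; lra.
Qed.

Lemma interval_affine_continuous a b c d : continuous (interval_affine a b c d).
Proof.
move=> t; apply: cvgD; last exact: cvg_cst.
by apply: cvgM; [exact: cvg_cst | apply: cvgB]; [exact: cvg_id | exact: cvg_cst].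
Qed.

End IntervalAffine.

Section Limits.
Variable R : realType.

Lemma cvgn_ge (u : R^nat) l x : u @ \oo --> l ->
  (\forall n \near \oo, x <= u n) -> x <= l.
Proof. by move=> ul ux; rewrite -(cvg_lim _ ul) //; apply: limr_ge => //; apply/cvg_ex; exists l. Qed.

Lemma norm_cvgn_le (u : R^nat) l r : u @ \oo --> l ->
  (\forall n \near \oo, `|u n| <= r) -> `|l| <= r.
Proof.
move=> ul ur; rewrite -(cvg_lim _ (cvg_norm ul)) //.
by apply: limr_le => //; apply/cvg_ex; exists `|l|; exact: cvg_norm.
Qed.

Definition series_tail (g : R^nat) m := limn (series g) - series g m.

Lemma series_tail_cvg0 (g : R^nat) : cvgn (series g) -> series_tail g @ \oo --> 0.
Proof.
move=> gc; rewrite /series_tail -(subrr (limn (series g))).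
by apply: cvgB; [exact: cvg_cst | exact: gc].
Qed.

Lemma sup_ge0 (E : set R) : has_ubound E -> (forall r, E r -> 0 <= r) ->
  0 <= sup E.
Proof.
move=> ubE E_ge0; have [[r Er]|noE] := pselect (exists r, E r).
  exact: le_trans (E_ge0 r Er) (ub_le_sup ubE Er).
suff -> : E = set0 by rewrite sup0.
by apply/seteqP; split => // r Er; apply: noE; exists r.
Qed.

Lemma cvg_uniform_approx (T : Type) (F : set_system T) {FF : Filter F}
    (f : T -> R) (G : nat -> T -> R) (r : R^nat) p :
  r @ \oo --> 0 -> (forall m, `|f p - G m p| <= r m) ->
  (forall m, \forall q \near F, `|f q - G m q| <= r m) ->
  (forall m, G m @ F --> G m p) -> f @ F --> f p.
Proof.
move=> r0 fp fq Gp; apply/cvgrPdist_le => e e0.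
have e3 : 0 < e / 3 by rewrite divr_gt0.
have [m rm] : exists m, r m <= e / 3.
  have [N _ hN] := (cvgrPdist_le _ _).1 r0 _ e3; exists N.
  by have := hN N (leqnn N); rewrite sub0r normrN; exact: le_trans (ler_norm _).
apply: filterS2 ((cvgrPdist_le _ _).1 (Gp m) _ e3) (fq m) => q hG hf.
have := fp m; move: hG hf; rewrite !ler_norml => /andP[? ?] /andP[? ?] /andP[? ?].
apply/andP; split; lra.
Qed.

End Limits.

Section Shrinking.
Variable R : realType.

Definition shrinking (a b : nat -> R) :=
  [/\ forall n, a n < b n, nondecreasing_seq a & nonincreasing_seq b].

Variables a b : nat -> R.
Hypothesis hab : shrinking a b.

Lemma shrinking_le m n : a m <= b n.
Proof.
case: hab => lt_ab nd_a ni_b; have [mn|/ltnW nm] := leqP m n.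
  exact: le_trans (nd_a _ _ mn) (ltW (lt_ab n)).
exact: le_trans (ltW (lt_ab m)) (ni_b _ _ nm).
Qed.

Lemma shrinking_mem_le m n t : (m <= n)%N -> a n <= t <= b n -> a m <= t <= b m.
Proof.
case: hab => _ nd_a ni_b mn /andP[ta tb].
by rewrite (le_trans (nd_a _ _ mn) ta) (le_trans tb (ni_b _ _ mn)).
Qed.

Lemma shrinking_cvg_lo : cvgn a.
Proof.
case: hab => _ nd_a _; apply: nondecreasing_is_cvgn nd_a _.
by exists (b 0) => _ [n _ <-]; exact: shrinking_le.
Qed.

Lemma shrinking_cvg_hi : cvgn b.
Proof.
case: hab => _ _ ni_b; apply: nonincreasing_is_cvgn ni_b _.
by exists (a 0) => _ [n _ <-]; exact: shrinking_le.
Qed.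

Lemma shrinking_lim_mem e : (forall n, a n <= e n <= b n) -> cvgn e ->
  limn a <= limn e <= limn b.
Proof.
move=> he ce; apply/andP; split; apply: ler_lim => //;
  [exact: shrinking_cvg_lo | | exact: shrinking_cvg_hi |];
  by apply: nearW => n; case/andP: (he n).
Qed.

Lemma shrinking_lim_le : limn a <= limn b.
Proof.
apply: ler_lim; [exact: shrinking_cvg_lo | exact: shrinking_cvg_hi |].
by apply: nearW => n; exact: shrinking_le.
Qed.

Lemma shrinking_mem t n : limn a <= t <= limn b -> a n <= t <= b n.
Proof.
case: hab => _ nd_a ni_b /andP[ta tb].
rewrite (le_trans (nondecreasing_cvgn_le nd_a shrinking_cvg_lo n) ta).
by rewrite (le_trans tb (nonincreasing_cvgn_ge ni_b shrinking_cvg_hi n)).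
Qed.

End Shrinking.

Section NestedAffine.
Variable R : realType.
Variables a b c d g : nat -> R.

Definition nested_affine n := interval_affine (a n) (b n) (c n) (d n).
Definition nested_affine_lim t := limn (nested_affine ^~ t).

(* In the application [a], [b] (resp. [c], [d]) are phiL_n, phiU_n along x (resp. along
   H_X x) and [g] is Gamma. *)
Definition summable_nesting :=
  [/\ shrinking a b, shrinking c d, cvgn (series g) &
      forall n t, a n.+1 <= t <= b n.+1 ->
        `|nested_affine n t - nested_affine n.+1 t| <= g n].

Hypothesis hN : summable_nesting.

Let hab : shrinking a b. Proof. by case: hN. Qed.
Let hcd : shrinking c d. Proof. by case: hN. Qed.
Let g_cvg : cvgn (series g). Proof. by case: hN. Qed.
Let g_step n t : a n.+1 <= t <= b n.+1 ->
  `|nested_affine n t - nested_affine n.+1 t| <= g n.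
Proof. by case: hN => _ _ _; apply. Qed.

Lemma nested_affine_mem n t : a n <= t <= b n -> c n <= nested_affine n t <= d n.
Proof.
have [lt_ab _ _] := hab; have [lt_cd _ _] := hcd.
exact: interval_affine_range (lt_ab n) (ltW (lt_cd n)).
Qed.

Lemma summable_nesting_step_ge0 n : 0 <= g n.
Proof.
have [lt_ab _ _] := hab.
apply: le_trans (normr_ge0 _) (g_step (n := n) (t := a n.+1) _).
by rewrite lexx ltW.
Qed.

Lemma series_le_limn m : series g m <= limn (series g).
Proof.
apply: nondecreasing_cvgn_le g_cvg _.
by apply/nondecreasing_seqP => n; rewrite seriesSr lerDl summable_nesting_step_ge0.
Qed.

Lemma nested_affine_dist m k t : a (m + k)%N <= t <= b (m + k)%N ->
  `|nested_affine m t - nested_affine (m + k)%N t| <= series g (m + k)%N - series g m.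
Proof.
elim: k => [|k IH] ht; first by rewrite !addn0 !subrr normr0.
rewrite addnS in ht *; rewrite seriesSr.
have := IH (shrinking_mem_le hab (leqnSn _) ht); have := g_step ht.
have := ler_distD (nested_affine (m + k) t) (nested_affine m t) (nested_affine (m + k).+1 t).
lra.
Qed.

Section AtPoint.
Variable t : R.
Hypothesis ht : limn a <= t <= limn b.

Let up n := nested_affine n t + series g n.
Let down n := nested_affine n t - series g n.

Let up_nd : nondecreasing_seq up.
Proof.
apply/nondecreasing_seqP => n; rewrite /up seriesSr.
have := g_step (shrinking_mem hab n.+1 ht); rewrite ler_norml => /andP[]; lra.
Qed.

Let down_ni : nonincreasing_seq down.
Proof.
apply/nonincreasing_seqP => n; rewrite /down seriesSr.
have := g_step (shrinking_mem hab n.+1 ht); rewrite ler_norml => /andP[]; lra.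
Qed.

Let up_cvg : cvgn up.
Proof.
apply: nondecreasing_is_cvgn up_nd _; have [_ _ ni_d] := hcd.
exists (d 0 + limn (series g)) => _ [n _ <-]; apply: lerD (series_le_limn n).
have /andP[_ le_d] := nested_affine_mem (shrinking_mem hab n ht).
exact: le_trans le_d (ni_d _ _ (leq0n n)).
Qed.

Let down_cvg : cvgn down.
Proof.
apply: nonincreasing_is_cvgn down_ni _; have [_ nd_c _] := hcd.
exists (c 0 - limn (series g)) => _ [n _ <-]; apply: lerB (series_le_limn n).
have /andP[le_c _] := nested_affine_mem (shrinking_mem hab n ht).
exact: le_trans (nd_c _ _ (leq0n n)) le_c.
Qed.

Let nested_up : nested_affine ^~ t = up - series g.
Proof. by apply/funext => n; rewrite /up /= addrK. Qed.

Let nested_down : nested_affine ^~ t = down + series g.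
Proof. by apply/funext => n; rewrite /down /= subrK. Qed.

Lemma nested_affine_cvg : cvgn (nested_affine ^~ t).
Proof. by rewrite nested_up; exact: is_cvgB up_cvg g_cvg. Qed.

Lemma nested_affine_lim_dist m :
  `|nested_affine_lim t - nested_affine m t| <= series_tail g m.
Proof.
have lim_up : nested_affine_lim t = limn up - limn (series g).
  by rewrite /nested_affine_lim nested_up limB.
have lim_down : nested_affine_lim t = limn down + limn (series g).
  by rewrite /nested_affine_lim nested_down limD.
have := nondecreasing_cvgn_le up_nd up_cvg m.
have := nonincreasing_cvgn_ge down_ni down_cvg m.
rewrite /up /down /series_tail ler_norml; lra.
Qed.

Lemma nested_affine_lim_mem : limn c <= nested_affine_lim t <= limn d.
Proof.
have mem n := nested_affine_mem (shrinking_mem hab n ht).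
exact: (shrinking_lim_mem hcd mem nested_affine_cvg).
Qed.

End AtPoint.

Lemma nested_affine_lim_seq e : (forall n, a n <= e n <= b n) -> cvgn e ->
  cvgn (fun n => nested_affine n (e n)) ->
  nested_affine_lim (limn e) = limn (fun n => nested_affine n (e n)).
Proof.
move=> he ce cf; set l := limn (fun n => nested_affine n (e n)).
have tail_dist m : `|nested_affine m (limn e) - l| <= series_tail g m.
  apply: (norm_cvgn_le (u := fun N => nested_affine m (e N) - nested_affine N (e N))).
    apply: cvgB _ cf.
    by apply: continuous_cvg ce; exact: interval_affine_continuous.
  near=> N; have mN : (m <= N)%N by near: N; exact: nbhs_infty_ge.
  rewrite -(subnKC mN); apply: le_trans (nested_affine_dist (he _)) _.
  by rewrite lerD2r series_le_limn.
have : `|nested_affine_lim (limn e) - l| <= 0.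
  apply: (cvgn_ge (u := fun m => series_tail g m + series_tail g m)).
    by rewrite -[0](addr0 0); apply: cvgD; exact: series_tail_cvg0.
  apply: nearW => m; apply: le_trans (ler_distD (nested_affine m (limn e)) _ _) _.
  exact: lerD (nested_affine_lim_dist (shrinking_lim_mem hab he ce) m) (tail_dist m).
by rewrite normr_le0 subr_eq0 => /eqP.
Unshelve. all: end_near.
Qed.

Lemma nested_affine_lim_lo : nested_affine_lim (limn a) = limn c.
Proof.
have [lt_ab _ _] := hab.
have endpoint : (fun n => nested_affine n (a n)) = c.
  by apply/funext => n; exact: interval_affine_lo.
rewrite -endpoint; apply: nested_affine_lim_seq (shrinking_cvg_lo hab) _.
  by move=> n; rewrite lexx ltW.
by rewrite endpoint; exact: shrinking_cvg_lo hcd.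
Qed.

Lemma nested_affine_lim_hi : nested_affine_lim (limn b) = limn d.
Proof.
have [lt_ab _ _] := hab.
have endpoint : (fun n => nested_affine n (b n)) = d.
  by apply/funext => n; rewrite /nested_affine interval_affine_hi // lt_eqF.
rewrite -endpoint; apply: nested_affine_lim_seq (shrinking_cvg_hi hab) _.
  by move=> n; rewrite lexx ltW.
by rewrite endpoint; exact: shrinking_cvg_hi hcd.
Qed.

Lemma nested_affine_limE t : limn a < limn b ->
  nested_affine_lim t = interval_affine (limn a) (limn b) (limn c) (limn d) t.
Proof.
move=> lt_AB; apply: cvg_lim => //; rewrite /nested_affine /interval_affine.
apply: cvgD; last exact: shrinking_cvg_lo hcd.
apply: cvgM; last by apply: cvgB; [exact: cvg_cst | exact: shrinking_cvg_lo hab].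
apply: cvgM; first by apply: cvgB; [exact: shrinking_cvg_hi hcd | exact: shrinking_cvg_lo hcd].
apply: cvgV; first by rewrite subr_eq0 gt_eqF.
by apply: cvgB; [exact: shrinking_cvg_hi hab | exact: shrinking_cvg_lo hab].
Qed.

Lemma nested_affine_lim_degenerate : limn a = limn b -> limn c = limn d.
Proof. by move=> eAB; rewrite -nested_affine_lim_lo -nested_affine_lim_hi eAB. Qed.

Lemma nested_affine_lim_surj r : limn c <= r <= limn d ->
  exists2 t, limn a <= t <= limn b & nested_affine_lim t = r.
Proof.
move=> hr; have le_AB := shrinking_lim_le hab.
have [eCD|neCD] := eqVneq (limn c) (limn d).
  exists (limn a); first by rewrite lexx le_AB.
  by rewrite nested_affine_lim_lo; apply/le_anti; rewrite {2}eCD.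
have neAB : limn a != limn b.
  by apply: contra neCD => /eqP/nested_affine_lim_degenerate ->.
have lt_AB : limn a < limn b by rewrite lt_neqAle neAB le_AB.
have lt_CD : limn c < limn d by rewrite lt_neqAle neCD (shrinking_lim_le hcd).
exists (interval_affine (limn c) (limn d) (limn a) (limn b) r).
  exact: interval_affine_range.
by rewrite nested_affine_limE // (interval_affineK neCD neAB).
Qed.

End NestedAffine.

Lemma nested_affine_limK (R : realType) (a b c d g g' : nat -> R) :
  summable_nesting a b c d g -> summable_nesting c d a b g' ->
  forall t, limn a <= t <= limn b ->
  nested_affine_lim c d a b (nested_affine_lim a b c d t) = t.
Proof.
move=> hN hN' t ht; have [eAB|neAB] := eqVneq (limn a) (limn b).
  have -> : t = limn a by apply/le_anti; move: ht; rewrite -eAB => /andP[-> ->].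
  by rewrite (nested_affine_lim_lo hN) (nested_affine_lim_lo hN').
have neCD : limn c != limn d.
  by apply: contra neAB => /eqP/(nested_affine_lim_degenerate hN') ->.
have [hab hcd _ _] := hN.
have lt_AB : limn a < limn b by rewrite lt_neqAle neAB shrinking_lim_le.
have lt_CD : limn c < limn d by rewrite lt_neqAle neCD shrinking_lim_le.
by rewrite (nested_affine_limE hN) // (nested_affine_limE hN') // interval_affineK.
Qed.

(** * Koenig's lemma and the Cantor system *)

Lemma finite_antitone_bound (T : finType) (P : nat -> T -> Prop) :
  (forall t k k', (k <= k')%N -> P k' t -> P k t) ->
  ~ (exists t, forall k, P k t) -> exists K, forall t, ~ P K t.
Proof.
move=> antitone noP.
have fails t : exists k, ~ P k t.
  apply: contrapT => allP; apply: noP; exists t => k.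
  by apply: contrapT => nP; apply: allP; exists k.
pose f t := projT1 (cid (fails t)).
exists (\big[maxn/0%N]_t f t) => t Pt.
exact: (projT2 (cid (fails t))) (antitone t _ _ (leq_bigmax t) Pt).
Qed.

Section Konig.
Local Unset Implicit Arguments.
Variables (R : realType) (S : FData R).
Variable A : forall n, vert S n -> Prop.
Hypothesis A_ne : forall n, exists v, A n v.
Hypothesis A_down : forall n w, A n.+1 w -> A n (Psi S n w).

Fixpoint extendable (k : nat) : forall n, vert S n -> Prop :=
  match k with
  | 0 => fun n u => A n u
  | k'.+1 => fun n u => A n u /\ exists w, Psi S n w = u /\ extendable k' n.+1 w
  end.

Lemma extendable_A {k n u} : extendable k n u -> A n u.
Proof. by case: k => [|k] //= []. Qed.

Lemma extendable_antitone {n u k k'} : (k <= k')%N -> extendable k' n u -> extendable k n u.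
Proof.
elim: k k' n u => [|k IH] [|k'] n u //=; first by move=> _ [].
by move=> kk' [Au [w [wu ext_w]]]; split => //; exists w; split => //; exact: IH ext_w.
Qed.

Lemma extendable_ex k n : exists u, extendable k n u.
Proof.
elim: k n => [|k IH] n /=; first exact: A_ne.
have [w ext_w] := IH n.+1; exists (Psi S n w); split; last by exists w.
exact/A_down/(extendable_A ext_w).
Qed.

Definition unbounded n u := forall k, extendable k n u.

Lemma unbounded_root : exists u, unbounded 0 u.
Proof.
apply: contrapT => noroot.
have [K HK] := finite_antitone_bound (fun u k k' => @extendable_antitone 0 u k k') noroot.
by have [u /HK] := extendable_ex K 0.
Qed.

Lemma unbounded_lift {n u} : unbounded n u ->
  exists w, Psi S n w = u /\ unbounded n.+1 w.
Proof.
move=> unb_u; apply: contrapT => nolift.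
pose P k w := Psi S n w = u /\ extendable k n.+1 w.
have antitone w k k' : (k <= k')%N -> P k' w -> P k w.
  by move=> kk' [wu ext_w]; split => //; exact: extendable_antitone ext_w.
have noP : ~ exists w, forall k, P k w.
  case=> w allk; apply: nolift; exists w.
  by split; [exact: (allk 0).1 | move=> k; exact: (allk k).2].
have [K HK] := finite_antitone_bound antitone noP.
by have [_ [w wK]] := unb_u K.+1; exact: HK wK.
Qed.

Fixpoint branch (n : nat) : {u | unbounded n u} :=
  match n with
  | 0 => exist _ (projT1 (cid unbounded_root)) (projT2 (cid unbounded_root))
  | n'.+1 => let: exist _ unb_u := branch n' in
     exist _ (projT1 (cid (unbounded_lift unb_u))) (projT2 (cid (unbounded_lift unb_u))).2
  end.

Lemma konig : exists2 x, Xset S x & forall n, A n (x n).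
Proof.
exists (fun n => projT1 (branch n)); last by move=> n; exact: (projT2 (branch n) 0).
by move=> n /=; case: (branch n) => u unb_u /=; rewrite (projT2 (cid (unbounded_lift unb_u))).1.
Qed.

End Konig.

Section CantorSystem.
Variables (R : realType) (S : FData R).
Hypothesis HF : is_Fsystem S.

Lemma Psi_edge n u v : edge S n.+1 u v -> edge S n (Psi S n u) (Psi S n v).
Proof. by case: HF => _ [_ h] _ _ _; apply: h. Qed.

Lemma edge_out n v : exists w, edge S n v w.
Proof. by case: HF => h _ _ _ _; case: (h n v). Qed.

Lemma edge_in n v : exists u, edge S n u v.
Proof. by case: HF => h _ _ _ _; case: (h n v). Qed.

Lemma edge_determined m : exists k, forall g : vert S (k + m),
  exists w, forall g', edge S (k + m) g g' -> psik S m k g' = w.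
Proof.
case: HF => _ _ _ /(_ m) [k [_ hk]] _; exists k => g.
by have [w [_ hw]] := hk g; exists w.
Qed.

Lemma psik_Xset x m k : Xset S x -> psik S m k (x (k + m)%N) = x m.
Proof. by move=> hx; elim: k => [//|k IH] /=; rewrite -hx. Qed.

Lemma HXrel_HX x : Xset S x -> HXrel S x (HX S x).
Proof.
move=> hx; rewrite /HX; case: pselect => [h|]; first exact: (projT2 (cid h)).
have lift n w : edge S n.+1 (x n.+1) w -> edge S n (x n) (Psi S n w).
  by rewrite (hx n); exact: Psi_edge.
case; have [y hy e] := konig _ S (fun n v => edge S n (x n) v) (fun n => edge_out (x n)) lift.
by exists y.
Qed.

Lemma HX_Xset x : Xset S x -> Xset S (HX S x).
Proof. by move=> /HXrel_HX [_ []]. Qed.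

Lemma HXrel_uniq x y y' : HXrel S x y -> HXrel S x y' -> y = y'.
Proof.
move=> [hx [hy ey]] [_ [hy' ey']]; apply: functional_extensionality_dep => m.
have [k /(_ (x (k + m)%N)) [w hw]] := edge_determined m.
by rewrite -(psik_Xset m k hy) -(psik_Xset m k hy') (hw _ (ey _)) (hw _ (ey' _)).
Qed.

Lemma HXrel_HXE x y : HXrel S x y -> HX S x = y.
Proof. by move=> hxy; have [hx _] := hxy; exact: HXrel_uniq (HXrel_HX hx) hxy. Qed.

Lemma HX_surj y : Xset S y -> exists2 x, Xset S x & HX S x = y.
Proof.
move=> hy; have lift n w : edge S n.+1 w (y n.+1) -> edge S n (Psi S n w) (y n).
  by rewrite (hy n); exact: Psi_edge.
have [x hx e] := konig _ S (fun n u => edge S n u (y n)) (fun n => edge_in (y n)) lift.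
by exists x => //; apply: HXrel_HXE.
Qed.

Lemma HX_coord_determined m : exists N, forall x z, Xset S x -> Xset S z ->
  x N = z N -> HX S x m = HX S z m.
Proof.
have [k hk] := edge_determined m; exists (k + m)%N => x z hx hz e.
have [_ [hX ex]] := HXrel_HX hx; have [_ [hZ ez]] := HXrel_HX hz.
have [w hw] := hk (x (k + m)%N).
by rewrite -(psik_Xset m k hX) -(psik_Xset m k hZ) (hw _ (ex _)) hw // e; exact: ez.
Qed.

End CantorSystem.

(** * Continuity on the fence *)

Section CoordinateTopology.
Variables (R : realType) (S : FData R).

Lemma nbhs_coord_eq (x : Pt S) m : \forall z \near x, z m = x m.
Proof.
have : open (proj m @^-1` [set x m] : set (Pt S)).
  by apply: open_comp; [move=> + _; exact: proj_continuous | exact: discrete_open].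
by move=> op; apply: open_nbhs_nbhs; split.
Qed.

Lemma cvg_coordwise (T : Type) (F : set_system T) {FF : Filter F} (f : T -> Pt S) (y : Pt S) :
  (forall m, \forall q \near F, f q m = y m) -> f @ F --> y.
Proof.
move=> h; apply/cvg_sup => m W [B [[A oA <-] By] BW].
by apply: filterS (h m) => q e; apply: BW; rewrite /= e.
Qed.

(* On [X], which carries the product of discrete topologies, this is continuity. *)
Definition coord_locally_constant (f : Pt S -> Pt S) := forall x m, Xset S x ->
  \forall z \near within (Xset S) (nbhs x), f z m = f x m.

Lemma within_continuous_coord_locally_constant f :
  {within Xset S, continuous f} -> coord_locally_constant f.
Proof.
by move=> fc x m hx; exact: (subspace_continuousP _ _).1 fc x hx _ (nbhs_coord_eq (f x) m).
Qed.

Lemma near_fence_fst (P : Pt S -> Prop) (x : Pt S) (t : R) :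
  (\forall z \near within (Xset S) (nbhs x), P z) ->
  \forall q \near within (Fence S) (nbhs (x, t)), P q.1.
Proof.
rewrite !near_withinE => h.
exists ((fun z => Xset S z -> P z), setT); first by split => //; exact: filterT.
by move=> [z t'] [/= hz _] [hz1 _]; apply: hz.
Qed.

Lemma fence_fst_cvg f (x : Pt S) (t : R) : coord_locally_constant f -> Xset S x ->
  (fun q : Pt S * R => f q.1) @ within (Fence S) (nbhs (x, t)) --> f x.
Proof.
by move=> hf hx; apply: cvg_coordwise => m; exact: near_fence_fst (hf x m hx).
Qed.

Lemma snE n (u v : vert S n) :
  sn S n u v = interval_affine (phiL S n u) (phiU S n u) (phiL S n v) (phiU S n v).
Proof. by []. Qed.

Lemma fence_approx_cvg f m (x : Pt S) (t : R) : coord_locally_constant f -> Xset S x ->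
  (fun q : Pt S * R => sn S m (q.1 m) (f q.1 m) q.2) @ within (Fence S) (nbhs (x, t))
    --> sn S m (x m) (f x m) t.
Proof.
move=> hf hx.
have frozen : \forall q \near within (Fence S) (nbhs (x, t)),
    q.1 m = x m /\ f q.1 m = f x m.
  apply: (near_fence_fst (P := fun z => z m = x m /\ f z m = f x m)).
  by apply: filterS2 (cvg_within (Xset S) (nbhs_coord_eq x m)) (hf x m hx) => z ? ?.
apply: cvg_trans (near_eq_cvg (g := fun q : Pt S * R => sn S m (q.1 m) (f q.1 m) q.2)
  (f := fun q : Pt S * R => sn S m (x m) (f x m) q.2) _) _.
  by apply: filterS frozen => -[z t'] /= [-> ->].
apply: cvg_within_filter; rewrite snE.
by apply: continuous_cvg cvg_snd; exact: interval_affine_continuous.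
Qed.

Lemma fence_map_cvg f (s : Pt S -> R -> R) r p :
  r @ \oo --> 0 -> coord_locally_constant f ->
  (forall z t m, Fence S (z, t) -> `|s z t - sn S m (z m) (f z m) t| <= r m) ->
  Fence S p ->
  (fun q : Pt S * R => (f q.1, s q.1 q.2)) @ within (Fence S) (nbhs p)
    --> (f p.1, s p.1 p.2).
Proof.
move=> r0 hf hs; case: p => x t hp; have hx : Xset S x by case: hp.
apply: (@cvg_pair _ _ _ _ (nbhs (f x)) (nbhs (s x t)) _ _ _ (fun q => f q.1) (fun q => s q.1 q.2)).
  exact: fence_fst_cvg.
apply: (cvg_uniform_approx (f := fun q : Pt S * R => s q.1 q.2) (p := (x, t))
  (G := fun m (q : Pt S * R) => sn S m (q.1 m) (f q.1 m) q.2) r0).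
- by move=> m; exact: hs.
- by move=> m; apply: filterS (withinT _ _) => -[z t'] /hs.
- by move=> m; exact: fence_approx_cvg.
Qed.

End CoordinateTopology.

Lemma HX_coord_locally_constant (R : realType) (S : FData R) :
  is_Fsystem S -> coord_locally_constant (HX S).
Proof.
move=> HF x m hx; have [N hN] := HX_coord_determined HF m.
rewrite near_withinE; apply: filterS (nbhs_coord_eq x N) => z ez hz.
exact: hN hz hx ez.
Qed.

(** * Lifting maps of X to the fence *)

Section FenceLift.
Variables (R : realType) (S : FData R).

Definition phiLseq (x : Pt S) n := phiL S n (x n).
Definition phiUseq (x : Pt S) n := phiU S n (x n).

Definition fence_lift (f : Pt S -> Pt S) (p : Pt S * R) : Pt S * R :=
  (f p.1, nested_affine_lim (phiLseq p.1) (phiUseq p.1) (phiLseq (f p.1)) (phiUseq (f p.1)) p.2).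

Lemma Tmap_fence_lift : Tmap S = fence_lift (HX S).
Proof. by []. Qed.

Variables (f : Pt S -> Pt S) (g : nat -> R).
Hypothesis f_X : forall x, Xset S x -> Xset S (f x).
Hypothesis f_nest : forall x, Xset S x ->
  summable_nesting (phiLseq x) (phiUseq x) (phiLseq (f x)) (phiUseq (f x)) g.

Lemma fence_lift_maps p : Fence S p -> Fence S (fence_lift f p).
Proof.
case: p => x t [/= hx ht]; split; first exact: f_X.
exact/andP/(nested_affine_lim_mem (f_nest hx))/andP.
Qed.

Lemma fence_lift_continuous : coord_locally_constant f ->
  {within Fence S, continuous (fence_lift f)}.
Proof.
move=> hf; apply/subspace_continuousP => -[x t] hp.
have [_ _ g_cvg _] := f_nest (proj1 hp).
apply: (fence_map_cvg (s := fun z => nested_affine_lim (phiLseq z) (phiUseq z)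
  (phiLseq (f z)) (phiUseq (f z))) (series_tail_cvg0 g_cvg) hf _ hp).
move=> z t' m [/= hz ht'].
exact: (nested_affine_lim_dist (f_nest hz) (introT andP ht') m).
Qed.

Lemma fence_lift_surj : (forall y, Xset S y -> exists2 x, Xset S x & f x = y) ->
  forall q, Fence S q -> exists2 p, Fence S p & fence_lift f p = q.
Proof.
move=> f_surj [y r] [/= hy hr]; have [x hx exy] := f_surj y hy; subst y.
have [t ht <-] := nested_affine_lim_surj (f_nest hx) (introT andP hr).
by exists (x, t) => //; split => //; apply/andP.
Qed.

Lemma fence_liftK f' g' : (forall x, Xset S x -> f' (f x) = x) ->
  (forall x, Xset S x ->
    summable_nesting (phiLseq (f x)) (phiUseq (f x)) (phiLseq x) (phiUseq x) g') ->
  forall p, Fence S p -> fence_lift f' (fence_lift f p) = p.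
Proof.
move=> ff' f_nest' [x t] [/= hx ht]; rewrite /fence_lift /= ff' //; congr pair.
exact: (nested_affine_limK (f_nest hx) (f_nest' x hx) (introT andP ht)).
Qed.

End FenceLift.

Section GammaBounds.
Variables (R : realType) (S : FData R).
Hypothesis HF : is_Fsystem S.
Hypothesis Hlt : forall n (v : vert S n), phiL S n v < phiU S n v.

Lemma phi_in01 n (v : vert S n) : 0 <= phiL S n v /\ phiU S n v <= 1.
Proof. by case: HF => _ _ _ _ [/(_ n v) [? [_ ?]] _ _ _]. Qed.

Lemma Psi_interval n (u : vert S n.+1) t : phiL S n.+1 u <= t <= phiU S n.+1 u ->
  phiL S n (Psi S n u) <= t <= phiU S n (Psi S n u).
Proof.
case: HF => _ _ _ _ [_ hU hL _] /andP[lo hi].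
by rewrite (le_trans (hL n u) lo) (le_trans hi (hU n u)).
Qed.

Lemma Xset_shrinking x : Xset S x -> shrinking (phiLseq x) (phiUseq x).
Proof.
case: HF => _ _ _ _ [_ hU hL _] hx; split; first by move=> n; exact: Hlt.
  by apply/nondecreasing_seqP => n; rewrite /phiLseq (hx n).
by apply/nonincreasing_seqP => n; rewrite /phiUseq (hx n).
Qed.

Lemma sn_in01 n (u v : vert S n) t : phiL S n u <= t <= phiU S n u ->
  0 <= sn S n u v t <= 1.
Proof.
move=> ht; have /andP[lo hi] := interval_affine_range (Hlt u) (ltW (Hlt v)) ht.
by have [v0 v1] := phi_in01 v; rewrite snE (le_trans v0 lo) (le_trans hi v1).
Qed.

Lemma GammaSet_in01 n r : GammaSet S n r -> 0 <= r <= 1.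
Proof.
case=> u [v [u' [v' [t [_ <- _ /andP ht ->]]]]].
have := sn_in01 v (Psi_interval ht); have := sn_in01 v' ht.
rewrite normr_ge0 ler_norml => /andP[? ?] /andP[? ?]; apply/andP; split; lra.
Qed.

Lemma GammaPlusSet_in01 n r : GammaPlusSet S n r -> 0 <= r <= 1.
Proof.
case=> u [v [u' [v' [t [_ _ <- /andP ht ->]]]]].
have := sn_in01 u (Psi_interval ht); have := sn_in01 u' ht.
rewrite normr_ge0 ler_norml => /andP[? ?] /andP[? ?]; apply/andP; split; lra.
Qed.

Lemma GammaSet_ub n : has_ubound (GammaSet S n).
Proof. by exists 1 => r /GammaSet_in01 /andP[]. Qed.

Lemma GammaPlusSet_ub n : has_ubound (GammaPlusSet S n).
Proof. by exists 1 => r /GammaPlusSet_in01 /andP[]. Qed.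

Lemma Gamma_ge0 n : 0 <= Gamma S n.
Proof. by apply: sup_ge0 (GammaSet_ub n) _ => r /GammaSet_in01 /andP[]. Qed.

Lemma GammaPlus_ge0 n : 0 <= GammaPlus S n.
Proof. by apply: sup_ge0 (GammaPlusSet_ub n) _ => r /GammaPlusSet_in01 /andP[]. Qed.

Lemma HXrel_summable_nesting x y : CondGamma S -> HXrel S x y ->
  summable_nesting (phiLseq x) (phiUseq x) (phiLseq y) (phiUseq y) (Gamma S).
Proof.
move=> HG [hx [hy e]]; split; try exact: Xset_shrinking.
  exact: nnseries_is_cvg Gamma_ge0 HG.
move=> n t /andP ht; apply: (ub_le_sup (GammaSet_ub n)).
by exists (x n), (y n), (x n.+1), (y n.+1), t; split; rewrite -?hx -?hy.
Qed.

Lemma HXrel_summable_nesting_inv x y : CondGammaPlus S -> HXrel S x y ->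
  summable_nesting (phiLseq y) (phiUseq y) (phiLseq x) (phiUseq x) (GammaPlus S).
Proof.
move=> HGP [hx [hy e]]; split; try exact: Xset_shrinking.
  exact: nnseries_is_cvg GammaPlus_ge0 HGP.
move=> n t /andP ht; apply: (ub_le_sup (GammaPlusSet_ub n)).
by exists (x n), (y n), (x n.+1), (y n.+1), t; split; rewrite -?hx -?hy.
Qed.

End GammaBounds.

Unset Implicit Arguments.

Theorem theorem8p1 (R : realType) (S : FData R) :
  is_Fsystem S ->
  (forall n (v : vert S n), phiL S n v < phiU S n v) ->
  CondGamma S ->
  [/\ (forall p, Fence S p -> Fence S (Tmap S p)),
      {within Fence S, continuous (Tmap S)},
      (forall q, Fence S q -> exists2 p, Fence S p & Tmap S p = q),
      (forall p, Fence S p -> (Tmap S p).1 = HX S p.1) &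
      (CondGammaPlus S -> homeo_on (Xset S) (HX S) ->
         homeo_on (Fence S) (Tmap S))].
Proof.
move=> HF Hlt HG; rewrite Tmap_fence_lift.
have HX_nest := fun x (hx : Xset S x) => HXrel_summable_nesting HF Hlt HG (HXrel_HX HF hx).
have T_maps := fence_lift_maps (HX_Xset HF) HX_nest.
have T_cont := fence_lift_continuous HX_nest (HX_coord_locally_constant HF).
split => //; first exact: fence_lift_surj HX_nest (HX_surj HF).
move=> HGP [_ _ [g0 [g0_X g0_HX HX_g0 g0_cont]]].
have g0_rel y : Xset S y -> HXrel S (g0 y) y.
  by move=> hy; rewrite -{2}(HX_g0 y hy); exact/HXrel_HX/g0_X.
have HX_nest' := fun x (hx : Xset S x) =>
  HXrel_summable_nesting_inv HF Hlt HGP (HXrel_HX HF hx).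
have g0_nest y hy := HXrel_summable_nesting_inv HF Hlt HGP (g0_rel y hy).
have g0_nest' y hy := HXrel_summable_nesting HF Hlt HG (g0_rel y hy).
split => //; exists (fence_lift g0); split.
- exact: fence_lift_maps g0_X g0_nest.
- exact: (fence_liftK HX_nest g0_HX HX_nest').
- exact: (fence_liftK g0_nest HX_g0 g0_nest').
- exact: fence_lift_continuous g0_nest (within_continuous_coord_locally_constant g0_cont).
Qed.
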